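(* Let $X$ be a CAT(0) space, $C\subseteq X$ a totally bounded subset with II-modulus of total boundedness $\gamma$ and $b>0$ an upper bound on the diameter of $C$, $\lambda\in(0,1)$, and $T:C\to C$ a $\lambda$-firmly nonexpansive mapping with $\mathrm{Fix}(T)\ne\emptyset$. Let $x\in C$ and $x_n:=T^nx$. Then for all $k\in\mathbb{N}$ and $g:\mathbb{N}\to\mathbb{N}$ there exists $N\le\Theta_0(\gamma^M(4k+3))+K$ such that for all $i,j\in[N,N+g(N)]$ and all $m\ge N$: $d(x_i,x_j)\le\frac1{k+1}$ and $d(x_m,Tx_m)\le\frac1{k+1}$. Here $c=\left\lceil\frac{8(b+1)^2}{\lambda(1-\lambda)}\right\rceil$, $K=c(k+1)^2$, $\Theta_0(0)=0$ and $\Theta_0(n+1)=c\big((g^M(\Theta_0(n)+K)+K)(4k+4)\big)^2$.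
   Context: In a CAT(0) space, $(1-\lambda)x+\lambda y$ denotes the point on the geodesic segment from $x$ to $y$ at distance $\lambda d(x,y)$ from $x$. $T:C\to C$ is $\lambda$-firmly nonexpansive if $d(Tx,Ty)\le d((1-\lambda)x+\lambda Tx,(1-\lambda)y+\lambda Ty)\le d(x,y)$ for all $x,y\in C$. II-modulus $\gamma$ for $C$: for every $k$ and every sequence $(y_n)$ in $C$ there are $0\le i<j\le\gamma(k)$ with $d(y_i,y_j)\le\frac1{k+1}$. For $f:\mathbb{N}\to\mathbb{N}$, $f^M(n):=\max\{f(i)\mid i\le n\}$. *)

From mathcomp Require Import all_boot all_order all_algebra.
From mathcomp Require Import reals.
Set Implicit Arguments. Unset Strict Implicit. Unset Printing Implicit Defensive.
Import Order.TTheory GRing.Theory Num.Theory.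
Local Open Scope ring_scope.

(* A CAT(0) space: a metric space (X, d) together with a geodesic selector
   W x y t = (1-t)x + t y (the point on the geodesic from x to y at distance
   t d(x,y) from x), such that t |-> W x y t is a geodesic on [0,1], and the
   Bruhat--Tits CN inequality holds (for midpoints).  A geodesic space
   satisfying CN is exactly a CAT(0) space. *)
Definition is_CAT0 (R : realType) (X : Type) (d : X -> X -> R)
  (W : X -> X -> R -> X) : Prop :=
  [/\ (forall x y, d x y = 0 <-> x = y) /\
      (forall x y, d x y = d y x),
      (forall x y z, d x z <= d x y + d y z),
      (forall x y s t, 0 <= s <= 1 -> 0 <= t <= 1 ->
         d (W x y s) (W x y t) = `|s - t| * d x y),
      (forall x y, W x y 0 = x /\ W x y 1 = y) &
      (forall x y z, d z (W x y (2^-1)) ^+ 2 <=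
         2^-1 * d z x ^+ 2 + 2^-1 * d z y ^+ 2 - 4^-1 * d x y ^+ 2)].

Definition firmly_nonexpansive (R : realType) (X : Type) (d : X -> X -> R)
  (W : X -> X -> R -> X) (C : X -> Prop) (lam : R) (T : X -> X) : Prop :=
  forall x y, C x -> C y ->
    d (T x) (T y) <= d (W x (T x) lam) (W y (T y) lam) /\
    d (W x (T x) lam) (W y (T y) lam) <= d x y.

Definition II_modulus (R : realType) (X : Type) (d : X -> X -> R)
  (C : X -> Prop) (gamma : nat -> nat) : Prop :=
  forall (k : nat) (y : nat -> X), (forall n, C (y n)) ->
    exists i j : nat, (i < j <= gamma k)%N /\ d (y i) (y j) <= (k.+1%:R)^-1.

Definition monmax (f : nat -> nat) (n : nat) : nat := \max_(i < n.+1) f i.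

Definition cconst (R : realType) (b lam : R) : nat :=
  `|Num.ceil (8 * (b + 1) ^+ 2 / (lam * (1 - lam)))|%N.

Fixpoint Theta0 (c K k : nat) (g : nat -> nat) (n : nat) : nat :=
  match n with
  | 0 => 0
  | n'.+1 => c * ((monmax g (Theta0 c K k g n' + K) + K) * (4 * k + 4)) ^ 2
  end%N.

From mathcomp Require Import all_boot all_order all_algebra.
From mathcomp Require Import reals.
From mathcomp Require Import ring lra.
Import Order.TTheory GRing.Theory Num.Theory.
Set Implicit Arguments. Unset Strict Implicit.
Local Open Scope ring_scope.

(* For a fixed point [p] of [T], firm nonexpansiveness compares [T u] with
   [W u (T u) lam], and the CN inequality at parameter [lam] (obtained from
   its midpoint form by dyadic approximation) turns this into
   [d(Tu,p)^2 <= d(u,p)^2 - lam d(u,Tu)^2].  Summing along the orbit, and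
   using that the displacement [d(x_n, T x_n)] is nonincreasing, gives
   [lam n d(x_n, T x_n)^2 <= b^2], hence [d(x_n, T x_n) <= 1/L] as soon as
   [n >= c L^2].
   For metastability, apply the II-modulus to [y_l := x_(Theta0(l)+K)]: it
   yields [i < j] with [d(y_i, y_j) <= 1/(4k+4)].  Put [N := Theta0(i)+K].
   As [Theta0(j) >= Theta0(i+1)], the displacement at [y_j] is small enough
   that [d(x_(N+r), y_j) <= d(y_i, y_j) + r d(y_j, T y_j) <= 2/(4k+4)] for
   all [r <= g(N)], and the triangle inequality bounds the diameter of the
   window [[N, N + g(N)]] by [1/(k+1)]. *)

Lemma le0_of_le_div_exp2 (R : realType) (E M : R) :
  (forall n, E <= M / 2 ^+ n) -> E <= 0.
Proof.
move=> small; rewrite leNgt; apply/negP => E_gt0.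
set n := (Num.truncn (M / E)).+1.
have : M / E < n%:R by apply: truncnS_gt.
have : (n%:R : R) <= 2 ^+ n by rewrite -natrX ler_nat ltnW // ltn_expl.
have := small n; rewrite ler_pdivlMr ?exprn_gt0 // ltr_pdivrMr //.
nra.
Qed.

Lemma dyadic_floor (R : realType) (t : R) (n : nat) : 0 <= t <= 1 ->
  exists k, [/\ (k <= 2 ^ n)%N, k%:R / 2 ^+ n <= t & t - k%:R / 2 ^+ n <= 2 ^- n].
Proof.
case/andP=> t0 t1; have p2 : (0 : R) < 2 ^+ n by rewrite exprn_gt0.
have tn0 : 0 <= t * 2 ^+ n by rewrite mulr_ge0 // ltW.
exists (Num.truncn (t * 2 ^+ n)).
have /andP[lo hi] := truncn_itv tn0.
split.
- rewrite -(ler_nat R) natrX; apply: le_trans lo _; nra.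
- by rewrite ler_pdivrMr.
- by rewrite lerBlDl -{2}[2 ^- n]mul1r -mulrDl ler_pdivlMr // natr1 ltW.
Qed.

Section CAT0.
Variables (R : realType) (X : Type) (d : X -> X -> R) (W : X -> X -> R -> X).
Hypothesis HC : is_CAT0 d W.

Lemma dist_sym x y : d x y = d y x.
Proof. by case: HC => [[_ ->]]. Qed.

Lemma dist_triangle x y z : d x z <= d x y + d y z.
Proof. by case: HC. Qed.

Lemma dist_eq0 x y : d x y = 0 -> x = y.
Proof. by case: HC => [[/(_ x y) []]]. Qed.

Lemma dist_self x : d x x = 0.
Proof. by case: HC => [[/(_ x x) [_ ->]]]. Qed.

Lemma dist_ge0 x y : 0 <= d x y.
Proof. by have := dist_triangle x y x; rewrite dist_self (dist_sym y x); lra. Qed.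

Lemma dist_W x y s t : 0 <= s <= 1 -> 0 <= t <= 1 ->
  d (W x y s) (W x y t) = `|s - t| * d x y.
Proof. by case: HC => _ _ geo _ _; apply: geo. Qed.

Lemma W_0 x y : W x y 0 = x.
Proof. by case: HC => _ _ _ /(_ x y) []. Qed.

Lemma W_1 x y : W x y 1 = y.
Proof. by case: HC => _ _ _ /(_ x y) []. Qed.

Lemma cn_midpoint x y z : d z (W x y 2^-1) ^+ 2 <=
  2^-1 * d z x ^+ 2 + 2^-1 * d z y ^+ 2 - 4^-1 * d x y ^+ 2.
Proof. by case: HC. Qed.

Lemma W_diag x t : 0 <= t <= 1 -> W x x t = x.
Proof.
move=> t01; apply: dist_eq0; rewrite -{3}(W_0 x x) dist_W ?dist_self ?mulr0 //.
by rewrite lexx ler01.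
Qed.

Lemma dist_W_start x y t : 0 <= t <= 1 -> d x (W x y t) = t * d x y.
Proof.
move=> /[dup] t01 /andP[t0 _].
by rewrite -{1}(W_0 x y) dist_W ?lexx ?ler01 // sub0r normrN ger0_norm.
Qed.

Lemma midpoint_unique a b m : d a m = 2^-1 * d a b -> d m b = 2^-1 * d a b ->
  W a b 2^-1 = m.
Proof.
move=> am mb; have := cn_midpoint a b m; rewrite (dist_sym m a) am mb.
set e := d m _ => cn.
have : e ^+ 2 == 0 by rewrite eq_le sqr_ge0 andbT; nra.
by rewrite sqrf_eq0 => /eqP /dist_eq0 ->.
Qed.

Lemma W_midpoint x y s s' : 0 <= s -> s <= s' -> s' <= 1 ->
  W (W x y s) (W x y s') 2^-1 = W x y ((s + s') / 2).
Proof.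
move=> s0 ss' s'1.
have s01 : 0 <= s <= 1 by apply/andP; split; lra.
have s'01 : 0 <= s' <= 1 by apply/andP; split; lra.
have m01 : 0 <= (s + s') / 2 <= 1 by apply/andP; split; lra.
by apply: midpoint_unique; rewrite !dist_W // !ler0_norm; (field || lra).
Qed.

Definition cn_bound p x y (t : R) :=
  (1 - t) * d p x ^+ 2 + t * d p y ^+ 2 - t * (1 - t) * d x y ^+ 2.

Lemma cn_midpoint_closed p x y s s' : 0 <= s -> s <= s' -> s' <= 1 ->
  d p (W x y s) ^+ 2 <= cn_bound p x y s ->
  d p (W x y s') ^+ 2 <= cn_bound p x y s' ->
  d p (W x y ((s + s') / 2)) ^+ 2 <= cn_bound p x y ((s + s') / 2).
Proof.
move=> s0 ss' s'1 cn_s cn_s'; rewrite -W_midpoint //.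
apply: le_trans (cn_midpoint _ _ p) _.
rewrite dist_W; try by apply/andP; split; lra.
have -> : cn_bound p x y ((s + s') / 2) = 2^-1 * cn_bound p x y s +
    2^-1 * cn_bound p x y s' - 4^-1 * (`|s - s'| * d x y) ^+ 2.
  by rewrite -normrN ger0_norm ?opprB ?subr_ge0 // /cn_bound; field.
lra.
Qed.

Lemma cn_dyadic p x y n k : (k <= 2 ^ n)%N ->
  d p (W x y (k%:R / 2 ^+ n)) ^+ 2 <= cn_bound p x y (k%:R / 2 ^+ n).
Proof.
elim: n k => [|n IH] k.
  rewrite expn0 expr0 divr1 /cn_bound; case: k => [|[|//]] _.
    by rewrite W_0; lra.
  by rewrite W_1; lra.
have p2 : (0 : R) < 2 ^+ n by rewrite exprn_gt0.
have dyadic_le1 j : (j <= 2 ^ n)%N -> (j%:R : R) / 2 ^+ n <= 1.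
  by move=> hj; rewrite ler_pdivrMr // mul1r -natrX ler_nat.
rewrite expnS mul2n => hk.
have [[j def_k] | [j def_k]] : (exists j, k = j.*2.+1) \/ (exists j, k = j.*2).
  by case: (boolP (odd k)) => k_odd; [left | right]; exists k./2;
    rewrite -[LHS]odd_double_half ?(negbTE k_odd) ?k_odd.
- rewrite {}def_k ltn_double in hk *.
  have -> : (j.*2.+1)%:R / 2 ^+ n.+1 = (j%:R / 2 ^+ n + j.+1%:R / 2 ^+ n) / 2 :> R.
    by rewrite -addn1 -muln2 natrD natrM exprS; field; rewrite gt_eqF.
  apply: cn_midpoint_closed; rewrite ?divr_ge0 ?ler_pM2r ?invr_gt0 ?ler_nat ?exprn_ge0 //.
  + exact: dyadic_le1.
  + exact/IH/ltnW.
  + exact: IH.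
- rewrite {}def_k leq_double in hk *.
  have -> : (j.*2)%:R / 2 ^+ n.+1 = j%:R / 2 ^+ n :> R.
    by rewrite -muln2 natrM exprS; field; rewrite gt_eqF.
  exact: IH.
Qed.

Lemma dist_W_le p x y t s : 0 <= t -> t <= s -> s <= 1 ->
  d p (W x y s) <= d p (W x y t) + (s - t) * d x y.
Proof.
move=> t0 ts s1; apply: le_trans (dist_triangle p (W x y t) _) _.
rewrite dist_W ?ler0_norm ?opprB ?subr_le0 //; apply/andP; split; lra.
Qed.

Lemma cn_defect_le p x y t s : 0 <= t -> t <= s -> s <= 1 ->
  d p (W x y s) ^+ 2 - cn_bound p x y s <=
  d p (W x y t) ^+ 2 - cn_bound p x y t + (s - t) * (d p x + 2 * d x y) ^+ 2.
Proof.
move=> t0 ts s1.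
have gs_le := dist_W_le p x y t0 ts s1.
have gt_le := dist_triangle p x (W x y t).
rewrite dist_W_start in gt_le; last by apply/andP; split; lra.
have := dist_ge0 p (W x y s); have := dist_ge0 p (W x y t).
have := dist_ge0 p x; have := dist_ge0 p y; have := dist_ge0 x y.
rewrite /cn_bound.
move: gs_le gt_le; set A := d p x; set B := d p y; set D := d x y.
set gs := d p (W x y s); set gt := d p (W x y t) => gs_le gt_le D0 B0 A0 gt0 gs0.
have dD0 : 0 <= (s - t) * D by rewrite mulr_ge0 ?subr_ge0.
have gs2 : gs ^+ 2 <= (gt + (s - t) * D) ^+ 2 by rewrite ler_sqr ?nnegrE ?addr_ge0.
have gtD : gt * ((s - t) * D) <= (A + D) * ((s - t) * D).
  by rewrite ler_wpM2r //; nra.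
have dD2 : (s - t) * ((s - t) * D ^+ 2) <= 1 * ((s - t) * D ^+ 2).
  by rewrite ler_wpM2r ?mulr_ge0 ?subr_ge0 ?sqr_ge0 //; lra.
have dB : 0 <= (s - t) * B ^+ 2 by rewrite mulr_ge0 ?subr_ge0 ?sqr_ge0.
have dDts : 0 <= (s - t) * D ^+ 2 * (t + s) by rewrite !mulr_ge0 ?subr_ge0 ?sqr_ge0 ?addr_ge0 //; lra.
have dAD : 0 <= (s - t) * (A * D) by rewrite !mulr_ge0 ?subr_ge0.
have -> : (s - t) * (A + 2 * D) ^+ 2 =
  (s - t) * A ^+ 2 + 4 * ((s - t) * (A * D)) + 4 * ((s - t) * D ^+ 2) by ring.
move: gs2; rewrite sqrrD.
have -> : (1 - t) * A ^+ 2 + t * B ^+ 2 - t * (1 - t) * D ^+ 2 =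
  (1 - s) * A ^+ 2 + s * B ^+ 2 - s * (1 - s) * D ^+ 2
  + ((s - t) * A ^+ 2 - (s - t) * B ^+ 2 + (s - t) * D ^+ 2
     - (s - t) * D ^+ 2 * (t + s)) by ring.
nra.
Qed.

Lemma cn p x y t : 0 <= t <= 1 -> d p (W x y t) ^+ 2 <= cn_bound p x y t.
Proof.
move=> /[dup] t01 /andP[t0 t1]; rewrite -subr_le0.
apply: (@le0_of_le_div_exp2 _ _ ((d p x + 2 * d x y) ^+ 2)) => n.
have [k [kn kt tk]] := dyadic_floor n t01.
have k0 : 0 <= k%:R / 2 ^+ n :> R by rewrite divr_ge0 ?exprn_ge0.
apply: le_trans (cn_defect_le p x y k0 kt t1) _.
have := cn_dyadic p x y kn; rewrite -subr_le0.
have : (t - k%:R / 2 ^+ n) * (d p x + 2 * d x y) ^+ 2 <=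
    2 ^- n * (d p x + 2 * d x y) ^+ 2 by rewrite ler_wpM2r ?sqr_ge0.
rewrite mulrC; lra.
Qed.

End CAT0.

Lemma cconst_ge (R : realType) (b lam : R) : 0 < lam < 1 ->
  (1 + b) ^+ 2 <= lam * (cconst b lam)%:R.
Proof.
move=> /andP[lam0 lam1].
set Q := 8 * (b + 1) ^+ 2 / (lam * (1 - lam)).
have Q0 : 0 <= Q.
  by apply: divr_ge0; [rewrite mulr_ge0 ?sqr_ge0 | rewrite mulr_ge0 //; lra].
have Qc : Q <= (cconst b lam)%:R.
  rewrite /cconst natr_absz ger0_norm ?ceil_ge //.
  by rewrite ceil_ge0 -/Q; lra.
apply: le_trans (_ : lam * Q <= _); last by rewrite ler_pM2l.
have -> : lam * Q = 8 * (b + 1) ^+ 2 / (1 - lam).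
  by rewrite /Q; field; rewrite !gt_eqF ?subr_gt0.
rewrite ler_pdivlMr ?subr_gt0 // addrC.
have := sqr_ge0 (b + 1); nra.
Qed.

Lemma cconst_gt0 (R : realType) (b lam : R) : 0 <= b -> 0 < lam < 1 ->
  (0 < cconst b lam)%N.
Proof.
move=> b0 lam01; rewrite lt0n; apply/eqP => c0.
by have := cconst_ge b lam01; rewrite c0 mulr0 leNgt exprn_gt0 //; lra.
Qed.

Section FirmlyNonexpansive.
Variables (R : realType) (X : Type) (d : X -> X -> R) (W : X -> X -> R -> X).
Variables (C : X -> Prop) (lam : R) (T : X -> X).
Hypothesis HC : is_CAT0 d W.
Hypothesis lam01 : 0 < lam < 1.
Hypothesis T_in : forall u, C u -> C (T u).
Hypothesis T_fne : firmly_nonexpansive d W C lam T.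

Lemma iter_mem n u : C u -> C (iter n T u).
Proof. by move=> Cu; elim: n => //= n IH; apply: T_in. Qed.

Lemma fne_nonexpansive u v : C u -> C v -> d (T u) (T v) <= d u v.
Proof. by move=> Cu Cv; have [] := T_fne Cu Cv; apply: le_trans. Qed.

Lemma fne_fixpoint_dist p u : C p -> T p = p -> C u ->
  d (T u) p ^+ 2 <= d u p ^+ 2 - lam * d u (T u) ^+ 2.
Proof.
move=> Cp Tp Cu; have /andP[lam0 lam1] := lam01.
have lam01' : 0 <= lam <= 1 by rewrite !ltW.
have [+ _] := T_fne Cu Cp; rewrite Tp (W_diag HC) //.
have := cn HC p u (T u) lam01'; rewrite /cn_bound.
rewrite !(dist_sym HC _ p).
have := dist_ge0 HC p (T u); have := dist_ge0 HC p (W u (T u) lam).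
set A := d p u; set B := d p (T u); set D := d u (T u).
set w := d p (W u (T u) lam) => w0 B0 cnw Bw.
have : B ^+ 2 <= w ^+ 2 by rewrite ler_sqr ?nnegrE.
nra.
Qed.

Lemma orbit_energy x p n : C x -> C p -> T p = p ->
  d (iter n T x) p ^+ 2 + lam * n%:R * d (iter n T x) (T (iter n T x)) ^+ 2
  <= d x p ^+ 2.
Proof.
move=> Cx Cp Tp; elim: n => [|n IH]; first by rewrite mulr0 mul0r addr0.
apply: le_trans IH; rewrite iterS -natr1.
have := fne_fixpoint_dist Cp Tp (iter_mem n Cx).
have := fne_nonexpansive (iter_mem n Cx) (T_in (iter_mem n Cx)).
have := dist_ge0 HC (T (iter n T x)) (T (T (iter n T x))).
set r := d (iter n T x) _; set r' := d (T _) (T (T _)) => r'0 r'r.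
have : r' ^+ 2 <= r ^+ 2 by rewrite ler_sqr ?nnegrE //; apply: le_trans r'r.
have /andP[lam0 _] := lam01.
have : 0 <= lam * n%:R by rewrite mulr_ge0 // ltW.
nra.
Qed.

Lemma displacement_rate x p b (L n : nat) : C x -> C p -> T p = p ->
  d x p <= b -> (0 < L)%N -> (cconst b lam * L ^ 2 <= n)%N ->
  d (iter n T x) (T (iter n T x)) <= L%:R^-1.
Proof.
move=> Cx Cp Tp xpb L0 Ln.
have := orbit_energy n Cx Cp Tp.
have := dist_ge0 HC (iter n T x) p; have := dist_ge0 HC x p.
set r := d (iter n T x) (T _) => xp0 xnp0 energy.
have r0 : 0 <= r := dist_ge0 HC _ _.
have L0' : (0 : R) < L%:R by rewrite ltr0n.
have /andP[lam0 _] := lam01.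
have rate : (1 + b) ^+ 2 * L%:R ^+ 2 <= lam * n%:R.
  apply: le_trans (_ : lam * (cconst b lam)%:R * L%:R ^+ 2 <= _).
    by rewrite ler_wpM2r ?sqr_ge0 ?cconst_ge.
  by rewrite -mulrA ler_pM2l // -natrX -natrM ler_nat.
rewrite -[L%:R^-1]mul1r ler_pdivlMr // leNgt; apply/negP => rL.
have : (1 + b) ^+ 2 < (1 + b) ^+ 2 * (r * L%:R) ^+ 2.
  rewrite -{1}[(1 + b) ^+ 2]mulr1 ltr_pM2l; first by rewrite expr2; nra.
  by rewrite exprn_gt0 //; lra.
have : (1 + b) ^+ 2 * (r * L%:R) ^+ 2 <= lam * n%:R * r ^+ 2.
  by rewrite exprMn mulrA mulrAC; apply: ler_wpM2r; rewrite ?sqr_ge0.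
have : d x p ^+ 2 <= b ^+ 2 by rewrite ler_sqr ?nnegrE //; lra.
have := sqr_ge0 (d (iter n T x) p).
nra.
Qed.
End FirmlyNonexpansive.

Lemma leq_monmax (f : nat -> nat) i n : (i <= n)%N -> (f i <= monmax f n)%N.
Proof.
move=> le_in; have lt_in : (i < n.+1)%N by [].
exact: (@leq_bigmax _ (fun j : 'I_n.+1 => f j) (Ordinal lt_in)).
Qed.

Lemma monmax_homo (f : nat -> nat) : {homo monmax f : m n / (m <= n)%N}.
Proof.
move=> m n le_mn; apply/bigmax_leqP => i _.
by apply: leq_monmax; apply: leq_trans le_mn; rewrite -ltnS.
Qed.

Lemma Theta0_homo c K k g : {homo Theta0 c K k g : m n / (m <= n)%N}.
Proof.
apply: (homo_leq leqnn leq_trans); elim=> [//|n IH] /=.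
rewrite leq_mul2l leq_sqr leq_mul2r leq_add2r monmax_homo ?orbT //.
by rewrite leq_add2r.
Qed.

Lemma natr_mul_le_invn (R : numFieldType) (r m L : nat) (e : R) :
  (0 < L)%N -> (0 < m)%N -> (r * m <= L)%N -> e <= L%:R^-1 ->
  r%:R * e <= m%:R^-1.
Proof.
move=> L0 m0 rmL eL; apply: le_trans (_ : r%:R * L%:R^-1 <= _).
  by rewrite ler_wpM2l.
by rewrite ler_pdivrMr ?ltr0n // mulrC ler_pdivlMr ?ltr0n // -natrM ler_nat.
Qed.

Section Metastability.
Variables (R : realType) (X : Type) (d : X -> X -> R).
Variables (C : X -> Prop) (T : X -> X) (x : X) (c : nat).
Hypothesis d_sym : forall u v, d u v = d v u.
Hypothesis d_triangle : forall u v w, d u w <= d u v + d v w.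
Hypothesis T_nonexp : forall u v, C u -> C v -> d (T u) (T v) <= d u v.
Hypothesis orbit_in : forall n, C (iter n T x).
Hypothesis c_gt0 : (0 < c)%N.
Hypothesis rate : forall L n : nat, (0 < L)%N -> (c * L ^ 2 <= n)%N ->
  d (iter n T x) (T (iter n T x)) <= L%:R^-1.

Lemma dist_iter_shift r m n :
  d (iter (r + m) T x) (iter n T x) <=
  d (iter m T x) (iter n T x) + r%:R * d (iter n T x) (T (iter n T x)).
Proof.
elim: r => [|r IH]; first by rewrite add0n mul0r addr0.
rewrite addSn iterS -natr1 mulrDl mul1r addrA.
apply: le_trans (d_triangle _ (T (iter n T x)) _) _.
apply: lerD; last by rewrite d_sym.
by apply: le_trans IH; apply: T_nonexp.
Qed.

Variables (k : nat) (g : nat -> nat).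
Let K := (c * k.+1 ^ 2)%N.
Let Theta := Theta0 c K k g.

Lemma orbit_window_close i j m : (i < j)%N ->
  (Theta i + K <= m <= Theta i + K + g (Theta i + K))%N ->
  d (iter m T x) (iter (Theta j + K) T x) <=
  d (iter (Theta i + K) T x) (iter (Theta j + K) T x) + (4 * k + 4)%:R^-1.
Proof.
set N := (Theta i + K)%N => lt_ij /andP[Nm mN].
rewrite -(subnK Nm); apply: le_trans (dist_iter_shift _ _ _) _; rewrite lerD2l.
have K_gt0 : (0 < K)%N by rewrite muln_gt0 c_gt0 expn_gt0.
apply: (@natr_mul_le_invn _ _ _ ((monmax g N + K) * (4 * k + 4))).
- by rewrite muln_gt0 addn_gt0 K_gt0 orbT addn_gt0 orbT.
- by rewrite addn_gt0 orbT.
- rewrite leq_mul2r; apply/orP; right; apply: leq_trans (leq_addr _ _).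
  by apply: leq_trans (leq_monmax _ (leqnn _)); rewrite leq_subLR.
- apply: rate; first by rewrite muln_gt0 addn_gt0 K_gt0 orbT addn_gt0 orbT.
  apply: leq_trans (leq_addr _ _).
  exact: (Theta0_homo c K k g lt_ij).
Qed.

Lemma orbit_window_diam i j : (i < j)%N ->
  d (iter (Theta i + K) T x) (iter (Theta j + K) T x) <= (4 * k + 4)%:R^-1 ->
  forall a a', (Theta i + K <= a <= Theta i + K + g (Theta i + K))%N ->
  (Theta i + K <= a' <= Theta i + K + g (Theta i + K))%N ->
  d (iter a T x) (iter a' T x) <= k.+1%:R^-1.
Proof.
move=> lt_ij close a a' a_in a'_in.
have := orbit_window_close lt_ij a_in; have := orbit_window_close lt_ij a'_in.
have -> : (k.+1%:R^-1 : R) = 4 * (4 * k + 4)%:R^-1.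
  rewrite -[(4 * k + 4)%N]mulnSr natrM invfM mulrA divff ?mul1r //.
  by rewrite pnatr_eq0.
rewrite (d_sym (iter a' T x)).
have := d_triangle (iter a T x) (iter (Theta j + K) T x) (iter a' T x).
lra.
Qed.

End Metastability.

Theorem corollary7p9 (R : realType) (X : Type) (d : X -> X -> R)
  (W : X -> X -> R -> X) (C : X -> Prop) (gamma : nat -> nat) (b lam : R)
  (T : X -> X) (x : X) :
  is_CAT0 d W ->
  II_modulus d C gamma ->
  0 < b -> (forall u v, C u -> C v -> d u v <= b) ->
  0 < lam < 1 ->
  (forall u, C u -> C (T u)) ->
  firmly_nonexpansive d W C lam T ->
  (exists p, C p /\ T p = p) ->
  C x ->
  forall (k : nat) (g : nat -> nat),
    let c := cconst b lam in
    let K := (c * k.+1 ^ 2)%N in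
    exists N : nat,
      (N <= Theta0 c K k g (monmax gamma (4 * k + 3)) + K)%N /\
      (forall i j : nat, (N <= i <= N + g N)%N -> (N <= j <= N + g N)%N ->
         d (iter i T x) (iter j T x) <= (k.+1%:R)^-1) /\
      (forall m : nat, (N <= m)%N ->
         d (iter m T x) (T (iter m T x)) <= (k.+1%:R)^-1).
Proof.
move=> HC Hmod b0 Hb lam01 T_in T_fne [p [Cp Tp]] Cx k g c K.
have orbit_in n : C (iter n T x) := iter_mem T_in n Cx.
have rate L n : (0 < L)%N -> (c * L ^ 2 <= n)%N ->
    d (iter n T x) (T (iter n T x)) <= L%:R^-1.
  exact: (displacement_rate HC lam01 T_in T_fne Cx Cp Tp (Hb _ _ Cx Cp)).
have c_gt0 : (0 < c)%N := cconst_gt0 (ltW b0) lam01.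
have [i [j [/andP[lt_ij le_j] close]]] :=
  Hmod (4 * k + 3)%N _ (fun l => orbit_in (Theta0 c K k g l + K)%N).
exists (Theta0 c K k g i + K)%N; split; [|split].
- rewrite leq_add2r Theta0_homo //.
  exact: leq_trans (ltnW lt_ij) (leq_trans le_j (leq_monmax _ (leqnn _))).
- rewrite -addnS in close.
  exact: (orbit_window_diam (dist_sym HC) (dist_triangle HC)
    (fne_nonexpansive T_fne) orbit_in c_gt0 rate (k := k) (g := g) lt_ij close).
- by move=> m Nm; apply: rate => //; apply: leq_trans Nm; apply: leq_addl.
Qed.
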